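(* For every positive integer $\ell$ and every real $\gamma\ge0$, \[ \sum_{d\mid \ell}c_\ell(d)\,d^{\gamma}\le\prod_{p^n\| \ell}(p^{-\gamma}+p^{\gamma})^n . \]
   Context: The Chebyshev coefficients $c_{j,n}$ ($0\le j\le n$) are defined by $x^n=\sum_{j=0}^n c_{j,n}U_j(x/2)$, with $U_j$ the Chebyshev polynomials of the second kind ($(1-2yx+x^2)^{-1}=\sum_{j\ge0}U_j(y)x^j$). For $d\mid\ell$, $c_\ell(d)=\prod_{p\mid\ell} c_{j_p,n_p}$ where $p^{j_p}\| d$ and $p^{n_p}\|\ell$. *)

From Stdlib Require Import Reals.
From mathcomp Require Import all_boot.
Set Implicit Arguments. Unset Strict Implicit. Unset Printing Implicit Defensive.
Local Open Scope R_scope.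

(* Chebyshev polynomials of the second kind, U_j : R -> R, given by the
   recurrence U_0 = 1, U_1 = 2y, U_{j+2} = 2y U_{j+1} - U_j, which is the
   coefficient recurrence of (1 - 2yx + x^2)^{-1} = sum_j U_j(y) x^j. *)
Fixpoint chebU (j : nat) (y : R) : R :=
  match j with
  | 0 => R1
  | S j' => match j' with
            | 0 => 2 * y
            | S j'' => 2 * y * chebU j' y - chebU j'' y
            end
  end.

Definition cl (c : nat -> nat -> R) (l d : nat) : R :=
  \big[Rmult/R1]_(p <- primes l) c (logn p d) (logn p l).

From Stdlib Require Import Reals Lra.
From mathcomp Require Import all_boot all_algebra.
From mathcomp Require Import Rstruct.
Set Implicit Arguments. Unset Strict Implicit. Unset Printing Implicit Defensive.
Import GRing.Theory Num.Theory.
Local Open Scope R_scope.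

(* Multiplying x^n = sum_j c_{j,n} U_j(x/2) by x and using the recurrence
   2y U_j(y) = U_{j+1}(y) + U_{j-1}(y) expands x^{n+1}; as the U_j are
   linearly independent, c_{j,n+1} = c_{j-1,n} + c_{j+1,n}, so every c_{j,n}
   is nonnegative.  For t > 0, U_j((t + 1/t)/2) = t^j + t^{j-2} + ... + t^{-j}
   >= t^j, hence sum_j c_{j,n} t^j <= (t + 1/t)^n.  Both sides of the theorem
   are multiplicative over the factorisation of l, and the factor of the
   left side at p^n is sum_j c_{j,n} t^j with t = p^gamma. *)

Section ChebyshevPolynomial.
Variable A : nzRingType.
Local Open Scope ring_scope.

(* [chebUp j] is [U_j(X/2)]; with this scaling it is monic over any ring. *)
Fixpoint chebUp (j : nat) : {poly A} :=
  match j with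
  | 0 => 1
  | S j' => match j' with
            | 0 => 'X
            | S j'' => chebUp j' * 'X - chebUp j''
            end
  end.

Lemma chebUpSS j : chebUp j.+2 = chebUp j.+1 * 'X - chebUp j.
Proof. by []. Qed.

Lemma chebUp_monic_size j : chebUp j \is monic /\ size (chebUp j) = j.+1.
Proof.
suff : (chebUp j \is monic /\ size (chebUp j) = j.+1) /\
       (chebUp j.+1 \is monic /\ size (chebUp j.+1) = j.+2) by case.
elim: j => [|j [[_ size_j] [monic_j1 size_j1]]].
  by rewrite /= monic1 monicX size_poly1 size_polyX.
split=> //.
have size_X : size (chebUp j.+1 * 'X) = j.+3.
  by rewrite size_mulX -?size_poly_gt0 size_j1.
have size_lt : (size (- chebUp j)%R < size (chebUp j.+1 * 'X)%R)%N.
  by rewrite size_polyN size_X size_j.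
rewrite chebUpSS; split; last by rewrite size_polyDl.
by rewrite monicE lead_coefDl // lead_coefMX (monicP monic_j1).
Qed.

Lemma chebUp_lin_indep N (b : nat -> A) :
  \sum_(j < N) b j *: chebUp j = 0 -> forall j, (j < N)%N -> b j = 0.
Proof.
elim: N => [|N IH] // sum0 j j_lt.
move: sum0; rewrite big_ord_recr /= => sum0.
have bN0 : b N = 0.
  have [/monicP lead1 size_N] := chebUp_monic_size N.
  have topN : (chebUp N)`_N = 1 by rewrite -lead1 lead_coefE size_N.
  have := congr1 (fun p : {poly A} => p`_N) sum0.
  rewrite coefD coef_sum big1 ?add0r => [|i _].
    by rewrite coefZ coef0 topN mulr1.
  by rewrite coefZ nth_default ?mulr0 // (proj2 (chebUp_monic_size i)).
move: sum0; rewrite bN0 scale0r addr0 => /IH bj0.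
have [j_lt_N | j_ge_N] := ltnP j N; first exact: bj0.
by have -> : j = N by apply/eqP; rewrite eqn_leq j_ge_N -ltnS j_lt.
Qed.

End ChebyshevPolynomial.

Arguments chebUp {A} j.

Lemma chebUSS j y : chebU j.+2 y = 2 * y * chebU j.+1 y - chebU j y.
Proof. by []. Qed.

Lemma horner_chebUp j (x : R) : (chebUp j).[x]%R = chebU j (x / 2).
Proof.
suff : (chebUp j).[x]%R = chebU j (x / 2) /\
       (chebUp j.+1).[x]%R = chebU j.+1 (x / 2) by case.
elim: j => [|j [IH IH1]]; first by rewrite /= hornerX hornerC; split=> //; field.
split=> //; rewrite chebUpSS chebUSS hornerD hornerN hornerMX IH IH1.
have -> : 2 * (x / 2) = x by field.
by rewrite mulrC.
Qed.

Lemma chebU_lin_indep N (b : nat -> R) :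
  (forall x, \big[Rplus/R0]_(j < N) (b j * chebU j (x / 2)) = 0) ->
  forall j, (j < N)%N -> b j = 0.
Proof.
move=> sum0; apply: chebUp_lin_indep.
apply: (@roots_geq_poly_eq0 _ _ [seq i%:R%R | i <- iota 0 N]).
- apply/allP => x _; rewrite /root horner_sum -[X in _ == X](sum0 x).
  by apply/eqP/eq_bigr => i _; rewrite hornerZ horner_chebUp.
- by rewrite map_inj_uniq ?iota_uniq // => i k /eqP; rewrite eqr_nat => /eqP.
- rewrite size_map size_iota (leq_trans (size_sum _ _ _)) //.
  apply/bigmax_leqP => i _; rewrite (leq_trans (size_scale_leq _ _)) //.
  by rewrite (proj2 (chebUp_monic_size _ i)).
Qed.

Lemma chebU_rec j y :
  2 * y * chebU j y = chebU j.+1 y + (if j is j'.+1 then chebU j' y else 0).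
Proof. by case: j => [|j]; rewrite ?chebUSS /=; ring. Qed.

Lemma chebU_joukowskiS t j : t <> 0 ->
  chebU j.+1 ((t + / t) / 2) = t * chebU j ((t + / t) / 2) + pow (/ t) j.+1.
Proof.
move=> t_neq0; elim: j => [|j IH]; first by rewrite /=; field.
by rewrite chebUSS IH /=; field.
Qed.

Lemma pow_le_chebU_joukowski t j : 0 < t -> pow t j <= chebU j ((t + / t) / 2).
Proof.
move=> t_gt0; elim: j => [|j IH]; first by rewrite /=; lra.
rewrite chebU_joukowskiS; last lra.
have -> : pow t j.+1 = t * pow t j by [].
have := pow_lt (/ t) j.+1 (Rinv_0_lt_compat t t_gt0).
have := Rmult_le_compat_l t _ _ (Rlt_le _ _ t_gt0) IH.
lra.
Qed.

Section ChebyshevCoefficients.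
Variable c : nat -> nat -> R.
Hypothesis c_expansion : forall (n : nat) (x : R),
  pow x n = \big[Rplus/R0]_(j < n.+1) (c j n * chebU j (x / 2)).

(* [c j n] is unconstrained for [j > n]; [chebc] sets it to 0 there. *)
Let chebc n j := if (j <= n)%N then c j n else 0.

Let chebc_gt n j : (n < j)%N -> chebc n j = 0.
Proof. by rewrite /chebc ltnNge => /negbTE ->. Qed.

Let pow_chebc n x :
  pow x n = \big[Rplus/R0]_(j < n.+1) (chebc n j * chebU j (x / 2)).
Proof. by rewrite c_expansion; apply: eq_bigr => j _; rewrite /chebc -ltnS ltn_ord. Qed.

Let chebc_shift n j := (if j is j'.+1 then chebc n j' else 0) + chebc n j.+1.

Let powS_chebc_shift n x :
  pow x n.+1 = \big[Rplus/R0]_(j < n.+2) (chebc_shift n j * chebU j (x / 2)).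
Proof.
have -> : pow x n.+1 = \big[Rplus/R0]_(j < n.+1)
    (chebc n j * chebU j.+1 (x / 2) +
     chebc n j * (if j : nat is j'.+1 then chebU j' (x / 2) else 0)).
  rewrite [pow x n.+1]/= pow_chebc big_distrr /=; apply: eq_bigr => j _.
  by rewrite -Rmult_plus_distr_l -chebU_rec; field.
rewrite big_split /=.
under [RHS]eq_bigr => j _ do rewrite Rmult_plus_distr_r.
rewrite [RHS]big_split /=; congr Rplus.
  by rewrite [RHS]big_ord_recl /= Rmult_0_l Rplus_0_l.
rewrite big_ord_recl [RHS]big_ord_recr [in RHS]big_ord_recr /=.
rewrite (chebc_gt (ltnSn n)) (chebc_gt (ltnW (ltnSn n.+1))).
by rewrite !Rmult_0_l Rmult_0_r !Rplus_0_r Rplus_0_l.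
Qed.

Let chebc_recS n j : (j < n.+2)%N -> chebc n.+1 j = chebc_shift n j.
Proof.
suff diff0 : forall j, (j < n.+2)%N -> chebc n.+1 j - chebc_shift n j = 0.
  by move=> /diff0; lra.
apply: chebU_lin_indep => x.
under eq_bigr => i _ do rewrite Rmult_minus_distr_r.
by rewrite sumrB -pow_chebc -powS_chebc_shift subrr.
Qed.

Lemma cheb_coef_ge0 n j : (j <= n)%N -> 0 <= c j n.
Proof.
suff chebc_ge0 : forall m i, 0 <= chebc m i.
  by move=> j_le; have := chebc_ge0 n j; rewrite /chebc j_le.
elim=> [|m IH] i.
  rewrite /chebc; case: i => [|i] /=; last lra.
  by have := c_expansion 0 0; rewrite big_ord1 /=; lra.
have [m1_lt_i | i_le] := ltnP m.+1 i; first by rewrite chebc_gt //; lra.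
rewrite chebc_recS // /chebc_shift.
by case: i i_le => [|i] _; [have := IH 1%N | have := IH i; have := IH i.+2]; lra.
Qed.

Lemma sum_cheb_coef_pow_ge0 n t : 0 <= t ->
  0 <= \big[Rplus/R0]_(j < n.+1) (c j n * pow t j).
Proof.
move=> t_ge0; apply: (big_ind (Rle 0)) => [|x y|j _]; [lra | lra |].
by apply: Rmult_le_pos; [apply: cheb_coef_ge0; rewrite -ltnS | apply: pow_le].
Qed.

Lemma sum_cheb_coef_pow_le n t : 0 < t ->
  \big[Rplus/R0]_(j < n.+1) (c j n * pow t j) <= pow (/ t + t) n.
Proof.
move=> t_gt0; rewrite [/ t + t]Rplus_comm c_expansion.
apply: (big_ind2 Rle) => [|x1 x2 y1 y2|j _]; [lra | lra |].
apply: Rmult_le_compat_l; first by apply: cheb_coef_ge0; rewrite -ltnS.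
exact: pow_le_chebU_joukowski.
Qed.

End ChebyshevCoefficients.

Lemma gcdnM_coprime d a b : coprime a b -> gcdn d (a * b) = (gcdn d a * gcdn d b)%N.
Proof.
move=> cab; apply/eqP; rewrite eqn_dvd; apply/andP; split.
  rewrite muln_gcdl !muln_gcdr !dvdn_gcd.
  have g_d := dvdn_gcdl d (a * b).
  by rewrite !(dvdn_mulr _ g_d) (dvdn_mull _ g_d) dvdn_gcdr.
have coprime_gcd : coprime (gcdn d a) (gcdn d b).
  exact: coprime_dvdl (dvdn_gcdr _ _) (coprime_dvdr (dvdn_gcdr _ _) cab).
by rewrite dvdn_gcd Gauss_dvd // !dvdn_gcdl dvdn_mul ?dvdn_gcdr.
Qed.

Lemma big_divisors_coprime_mul (T : Type) (idx : T) (op : Monoid.com_law idx)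
    (F : nat -> T) a b :
  (0 < a)%N -> (0 < b)%N -> coprime a b ->
  \big[op/idx]_(d <- divisors (a * b)) F d =
  \big[op/idx]_(x <- divisors a) \big[op/idx]_(y <- divisors b) F (x * y)%N.
Proof.
move=> a_gt0 b_gt0 cab; rewrite -big_allpairs_dep; apply/perm_big/uniq_perm.
- exact: divisors_uniq.
- have gcd_left x y : (x %| a)%N -> (y %| b)%N -> gcdn a (x * y) = x.
    by move=> x_a y_b; rewrite Gauss_gcdl ?(coprime_dvdr y_b cab) //; apply/gcdn_idPr.
  have gcd_right x y : (x %| a)%N -> (y %| b)%N -> gcdn b (x * y) = y.
    move=> x_a y_b; rewrite mulnC Gauss_gcdl; first exact/gcdn_idPr.
    by rewrite coprime_sym (coprime_dvdl x_a cab).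
  rewrite allpairs_uniq ?divisors_uniq // => -[x1 y1] [x2 y2].
  move=> /allpairsP[[? ?] [/= + + [-> ->]]] /allpairsP[[? ?] [/= + + [-> ->]]].
  rewrite -!dvdn_divisors // => x1_a y1_b x2_a y2_b /= eq12.
  congr pair; first by rewrite -(gcd_left _ _ x1_a y1_b) eq12 gcd_left.
  by rewrite -(gcd_right _ _ x1_a y1_b) eq12 gcd_right.
- move=> d; rewrite -dvdn_divisors ?muln_gt0 ?a_gt0 //.
  apply/idP/allpairsP => [d_dvd | [[x y] [/= x_in y_in ->]]]; last first.
    by apply: dvdn_mul; rewrite dvdn_divisors.
  exists (gcdn d a, gcdn d b); rewrite /= -!dvdn_divisors ?dvdn_gcdr //.
  by rewrite -gcdnM_coprime // (gcdn_idPl d_dvd).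
Qed.

Lemma big_divisors_pfactor (T : Type) (idx : T) (op : Monoid.com_law idx)
    (F : nat -> T) p n :
  prime p ->
  \big[op/idx]_(d <- divisors (p ^ n)) F d = \big[op/idx]_(j < n.+1) F (p ^ j)%N.
Proof.
move=> p_pr; rewrite -(big_mkord xpredT (fun j => F (p ^ j)%N)).
rewrite -(big_map (fun j => (p ^ j)%N) xpredT F).
apply/perm_big/uniq_perm; first exact: divisors_uniq.
  by rewrite map_inj_uniq ?iota_uniq //; apply/expnI/prime_gt1.
move=> d; rewrite -dvdn_divisors ?expn_gt0 ?prime_gt0 //.
apply/(dvdn_pfactor _ _ p_pr)/mapP => -[j j_in ->]; exists j => //.
  by rewrite mem_iota.
by move: j_in; rewrite mem_iota.
Qed.

Lemma Rpower_1_l x : Rpower 1 x = 1.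
Proof. by rewrite /Rpower ln_1 Rmult_0_r exp_0. Qed.

Lemma Rpower_INR_mul a b x : (0 < a)%N -> (0 < b)%N ->
  Rpower (INR (a * b)) x = Rpower (INR a) x * Rpower (INR b) x.
Proof.
by move=> a_gt0 b_gt0; rewrite mult_INR Rpower_mult_distr //; apply/lt_0_INR/ltP.
Qed.

Lemma Rpower_INR_exp p j x : (0 < p)%N ->
  Rpower (INR (p ^ j)) x = pow (Rpower (INR p) x) j.
Proof.
move=> p_gt0; elim: j => [|j IH]; first by rewrite expn0 Rpower_1_l.
by rewrite expnS Rpower_INR_mul ?expn_gt0 ?p_gt0 // IH.
Qed.

Lemma logn_pfactor_mul p j y : prime p -> (0 < y)%N -> coprime p y ->
  logn p (p ^ j * y) = j.
Proof.
move=> p_pr y_gt0 cpy.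
by rewrite lognM ?expn_gt0 ?(prime_gt0 p_pr) // pfactorK // logn_coprime // addn0.
Qed.

Lemma logn_pfactor_mul_neq q p j y : prime p -> (0 < y)%N -> q != p ->
  logn q (p ^ j * y) = logn q y.
Proof.
move=> p_pr y_gt0 q_neq_p.
rewrite lognM ?expn_gt0 ?(prime_gt0 p_pr) // lognX logn_prime //.
by rewrite (negbTE q_neq_p) muln0.
Qed.

Lemma prime_coprime_notin_primes p m : prime p -> coprime p m -> p \notin primes m.
Proof.
by move=> p_pr cpm; rewrite mem_primes p_pr /= negb_and -prime_coprime // cpm orbT.
Qed.

Lemma mem_primes_coprime_neq p m q : prime p -> coprime p m -> q \in primes m -> q != p.
Proof.
by move=> p_pr cpm; apply: contraTneq => ->; exact: prime_coprime_notin_primes.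
Qed.

Lemma primes_pfactor_mul p n m : prime p -> (0 < n)%N -> (0 < m)%N -> coprime p m ->
  perm_eq (primes (p ^ n * m)) (p :: primes m).
Proof.
move=> p_pr n_gt0 m_gt0 cpm; apply: uniq_perm; first exact: primes_uniq.
  by rewrite /= primes_uniq andbT prime_coprime_notin_primes.
move=> q; rewrite primesM ?expn_gt0 ?(prime_gt0 p_pr) // primesX // primes_prime //.
by rewrite mem_seq1 in_cons.
Qed.

Lemma cl_pfactor_mul (c : nat -> nat -> R) p n m j y :
  prime p -> (0 < n)%N -> (0 < m)%N -> coprime p m -> (y %| m)%N ->
  cl c (p ^ n * m) (p ^ j * y) = c j n * cl c m y.
Proof.
move=> p_pr n_gt0 m_gt0 cpm y_dvd; have y_gt0 := dvdn_gt0 m_gt0 y_dvd.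
rewrite /cl (perm_big _ (primes_pfactor_mul p_pr n_gt0 m_gt0 cpm)) big_cons.
rewrite !logn_pfactor_mul ?(coprime_dvdr y_dvd cpm) //; congr (_ * _).
apply: eq_big_seq => q q_in.
by rewrite !logn_pfactor_mul_neq ?(mem_primes_coprime_neq p_pr cpm q_in).
Qed.

Definition divisor_sum (c : nat -> nat -> R) gamma l :=
  \big[Rplus/R0]_(d <- divisors l) (cl c l d * Rpower (INR d) gamma).

Definition divisor_bound gamma l :=
  \big[Rmult/R1]_(p <- primes l)
     pow (Rpower (INR p) (- gamma) + Rpower (INR p) gamma) (logn p l).

Lemma divisor_sum_pfactor_mul c gamma p n m :
  prime p -> (0 < n)%N -> (0 < m)%N -> coprime p m ->
  divisor_sum c gamma (p ^ n * m) =
  \big[Rplus/R0]_(j < n.+1) (c j n * pow (Rpower (INR p) gamma) j) *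
  divisor_sum c gamma m.
Proof.
move=> p_pr n_gt0 m_gt0 cpm; have p_gt0 := prime_gt0 p_pr.
rewrite /divisor_sum big_divisors_coprime_mul ?expn_gt0 ?p_gt0 ?coprimeXl //.
rewrite big_divisors_pfactor // big_distrl /=; apply: eq_bigr => j _.
rewrite big_distrr /=; apply: eq_big_seq => y; rewrite -dvdn_divisors // => y_dvd.
rewrite cl_pfactor_mul // Rpower_INR_mul ?expn_gt0 ?p_gt0 ?(dvdn_gt0 m_gt0 y_dvd) //.
by rewrite Rpower_INR_exp //; ring.
Qed.

Lemma divisor_bound_pfactor_mul gamma p n m :
  prime p -> (0 < n)%N -> (0 < m)%N -> coprime p m ->
  divisor_bound gamma (p ^ n * m) =
  pow (Rpower (INR p) (- gamma) + Rpower (INR p) gamma) n * divisor_bound gamma m.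
Proof.
move=> p_pr n_gt0 m_gt0 cpm.
rewrite /divisor_bound (perm_big _ (primes_pfactor_mul p_pr n_gt0 m_gt0 cpm)) big_cons.
rewrite logn_pfactor_mul //; congr (_ * _).
apply: eq_big_seq => q q_in.
by rewrite logn_pfactor_mul_neq ?(mem_primes_coprime_neq p_pr cpm q_in).
Qed.

Lemma divisor_bound_ge0 gamma l : 0 <= divisor_bound gamma l.
Proof.
apply: (big_ind (Rle 0)) => [|x y|q _]; [lra | exact: Rmult_le_pos |].
by apply/pow_le/Rplus_le_le_0_compat; apply/Rlt_le/exp_pos.
Qed.

Lemma exists_pfactor_coprime l : (1 < l)%N ->
  exists p n m, [/\ prime p, (0 < n)%N, coprime p m & l = (p ^ n * m)%N].
Proof.
move=> l_gt1; have l_gt0 := ltnW l_gt1; have p_pr := pdiv_prime l_gt1.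
have [m cpm l_eq] := pfactor_coprime p_pr l_gt0.
exists (pdiv l), (logn (pdiv l) l), m; split=> //; last by rewrite mulnC -l_eq.
by rewrite logn_gt0 mem_primes p_pr l_gt0 pdiv_dvd.
Qed.

Theorem lemma6p1 (c : nat -> nat -> R)
  (Hc : forall (n : nat) (x : R),
      pow x n = \big[Rplus/R0]_(j < n.+1) (c j n * chebU j (x / 2)))
  (l : nat) (gamma : R) :
  (0 < l)%nat -> (0 <= gamma) ->
  (\big[Rplus/R0]_(d <- divisors l) (cl c l d * Rpower (INR d) gamma)
   <= \big[Rmult/R1]_(p <- primes l)
        pow (Rpower (INR p) (- gamma) + Rpower (INR p) gamma) (logn p l)).
Proof.
move=> l_gt0 _; change (divisor_sum c gamma l <= divisor_bound gamma l).
elim/ltn_ind: l l_gt0 => l IH l_gt0.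
have [l_le1 | l_gt1] := leqP l 1.
  have -> : l = 1%N by apply/eqP; rewrite eqn_leq l_le1.
  rewrite /divisor_sum /divisor_bound /cl (_ : divisors 1 = [:: 1%N]) //.
  by rewrite (_ : primes 1 = [::]) // big_seq1 !big_nil Rpower_1_l; lra.
have [p [n [m [p_pr n_gt0 cpm l_eq]]]] := exists_pfactor_coprime l_gt1.
have m_gt0 : (0 < m)%N by move: l_gt0; rewrite l_eq muln_gt0 => /andP[].
have m_lt_l : (m < l)%N.
  by rewrite l_eq ltn_Pmull // -{1}(expn0 p) ltn_exp2l ?prime_gt1.
rewrite l_eq divisor_sum_pfactor_mul // divisor_bound_pfactor_mul //.
have t_gt0 : 0 < Rpower (INR p) gamma by exact: exp_pos.
apply: Rle_trans (Rmult_le_compat_l _ _ _ _ (IH m m_lt_l m_gt0)) _.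
  exact/(sum_cheb_coef_pow_ge0 Hc)/Rlt_le.
apply: Rmult_le_compat_r; first exact: divisor_bound_ge0.
by rewrite Rpower_Ropp; exact: sum_cheb_coef_pow_le.
Qed.
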